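(* Let $\lambda$ be an infinite cardinal with $\lambda=\lambda^{<\lambda}$. Then $\mathfrak{b}_\lambda\le\mathfrak{b}^7_\lambda$. In other words: if $\mathcal{B},\mathcal{C}\subseteq[\lambda]^\lambda$, $|\mathcal{C}|\le\lambda$, $|\mathcal{B}|<\mathfrak{b}_\lambda$, and $|B\cap C|<\lambda$ for all $B\in\mathcal{B}$, $C\in\mathcal{C}$, then $\mathcal{B}$ and $\mathcal{C}$ are separable.
   Context: For sets $A,B$, $A\subseteq^* B$ means $|A\setminus B|<\lambda$. For families $\mathcal{B},\mathcal{C}$ of subsets of $\lambda$, write $\mathcal{B}\perp\mathcal{C}$ if $|B\cap C|<\lambda$ for all $B\in\mathcal{B}$, $C\in\mathcal{C}$. A set $S$ separates $\mathcal{B}$ and $\mathcal{C}$ if $B\subseteq^* S$ for every $B\in\mathcal{B}$ and $|C\cap S|<\lambda$ for every $C\in\mathcal{C}$; they are separable if such $S$ exists. $\mathfrak{b}^7_\lambda$ is the least cardinality of a family $\mathcal{B}\subseteq[\lambda]^\lambda$ for which there exists $\mathcal{C}\subseteq[\lambda]^\lambda$ with $|\mathcal{C}|=\lambda$, $\mathcal{B}\perp\mathcal{C}$, and $\mathcal{B},\mathcal{C}$ not separable. For $f,g\in{}^\lambda\lambda$, $f\le^* g$ means $|\{\alpha<\lambda: f(\alpha)>g(\alpha)\}|<\lambda$; $B\subseteq{}^\lambda\lambda$ is unbounded if no $h\in{}^\lambda\lambda$ satisfies $f\le^*h$ for all $f\in B$; $\mathfrak{b}_\lambda$ is the least cardinality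 of an unbounded family. *)

From Stdlib Require Import Classical Relations Wellfounded.

Definition card_le (A B : Type) : Prop :=
  exists f : A -> B, forall x y, f x = f y -> x = y.

Definition card_lt (A B : Type) : Prop := card_le A B /\ ~ card_le B A.

Section Lambda.
Variable L : Type.
Variable R : L -> L -> Prop.

(* the cardinal lambda: a strict well-order on L whose proper initial
   segments all have cardinality < |L|, i.e. L has order type the initial
   ordinal lambda = |L|. *)
Definition is_cardinal_order : Prop :=
  (forall x, ~ R x x) /\
  (forall x y z, R x y -> R y z -> R x z) /\
  (forall x y, R x y \/ x = y \/ R y x) /\
  well_founded R /\
  (forall x, card_lt {y : L | R y x} L).

Definition small (A : L -> Prop) : Prop := ~ card_le L {x : L | A x}.

Definition large (A : L -> Prop) : Prop := card_le L {x : L | A x}.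

Definition subset_star (A B : L -> Prop) : Prop :=
  small (fun x => A x /\ ~ B x).

Definition le_star (f g : L -> L) : Prop :=
  small (fun a => R (g a) (f a)).

Definition unbounded (F : (L -> L) -> Prop) : Prop :=
  ~ exists h : L -> L, forall f, F f -> le_star f h.

Definition separates (S : L -> Prop) (Bf Cf : (L -> Prop) -> Prop) : Prop :=
  (forall B, Bf B -> subset_star B S) /\
  (forall C, Cf C -> small (fun x => C x /\ S x)).

Definition separable (Bf Cf : (L -> Prop) -> Prop) : Prop :=
  exists S : L -> Prop, separates S Bf Cf.

End Lambda.

(* Enumerate the second family as (C_ξ)_{ξ<λ}.  For B in the first family and α < λ, the set of
   x in B lying in some C_ξ with ξ <= α is a union of fewer than λ sets of size < λ, hence (as
   λ^{<λ} = λ makes λ regular) bounded by some g_B(α) < λ.  Fewer than b_λ functions g_B are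
   dominated by one h, and S = {x | x < h(ξ) whenever x ∈ C_ξ} works: C_ξ ∩ S lies below h(ξ),
   and B \ S lies below g_B(α_0), where α_0 bounds the small set of ξ with g_B(ξ) > h(ξ). *)
From Stdlib Require Import Classical ClassicalEpsilon ProofIrrelevance FinFun.

Lemma injective_left_inverse (A B : Type) (f : A -> B) :
  inhabited A -> Injective f -> exists g : B -> A, forall x, g (f x) = x.
Proof.
  intros [a0] f_inj.
  assert (Hg : forall y, exists x, (exists x', f x' = y) -> f x = y).
  { intro y. destruct (classic (exists x', f x' = y)) as [[x' Ex'] | N].
    - exists x'. auto.
    - exists a0. intro H. contradiction. }
  destruct (choice _ Hg) as [g Hgf].
  exists g. intro x. apply f_inj, Hgf. eauto.
Qed.

Lemma hilbert_hotel (T : Type) (k : nat -> T) :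
  Injective k -> exists sh : T -> T, Injective sh /\ forall y, sh y <> k 0.
Proof.
  intro k_inj.
  assert (Hsh : forall y, exists z, ((exists n, y = k n) -> exists n, y = k n /\ z = k (S n))
                               /\ (~ (exists n, y = k n) -> z = y)).
  { intro y. destruct (classic (exists n, y = k n)) as [[n En] | N].
    - exists (k (S n)). split; [eauto | intro N; exfalso; eauto].
    - exists y. split; [intro K; contradiction | auto]. }
  destruct (choice _ Hsh) as [sh Hsh'].
  exists sh. split.
  - intros y z E.
    destruct (classic (exists n, y = k n)) as [Ky | Ny];
      destruct (classic (exists n, z = k n)) as [Kz | Nz].
    + destruct (proj1 (Hsh' y) Ky) as [n [-> En]], (proj1 (Hsh' z) Kz) as [m [-> Em]].
      rewrite En, Em in E. apply k_inj in E. congruence.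
    + destruct (proj1 (Hsh' y) Ky) as [n [_ En]].
      rewrite En, (proj2 (Hsh' z) Nz) in E. exfalso. eauto.
    + destruct (proj1 (Hsh' z) Kz) as [n [_ En]].
      rewrite En, (proj2 (Hsh' y) Ny) in E. exfalso. eauto.
    + now rewrite (proj2 (Hsh' y) Ny), (proj2 (Hsh' z) Nz) in E.
  - intros y E. destruct (classic (exists n, y = k n)) as [Ky | Ny].
    + destruct (proj1 (Hsh' y) Ky) as [n [_ En]].
      rewrite En in E. apply k_inj in E. discriminate.
    + rewrite (proj2 (Hsh' y) Ny) in E. eauto.
Qed.

Section Small.
Variable L : Type.

Lemma large_iff_embedding (P : L -> Prop) :
  large L P <-> exists f : L -> L, Injective f /\ forall x, P (f x).
Proof.
  split.
  - intros [f f_inj]. exists (fun x => proj1_sig (f x)). split.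
    + intros x y E. apply f_inj. destruct (f x), (f y). simpl in E. subst.
      f_equal. apply proof_irrelevance.
    + intro x. exact (proj2_sig (f x)).
  - intros [f [f_inj fP]]. exists (fun x => exist _ (f x) (fP x)).
    intros x y E. apply f_inj. exact (f_equal (@proj1_sig _ _) E).
Qed.

Lemma small_iff_no_embedding (P : L -> Prop) :
  small L P <-> ~ exists f : L -> L, Injective f /\ forall x, P (f x).
Proof. exact (not_iff_compat (large_iff_embedding P)). Qed.

Lemma small_subset (P Q : L -> Prop) :
  (forall x, P x -> Q x) -> small L Q -> small L P.
Proof.
  rewrite !small_iff_no_embedding. intros PQ HQ [f [f_inj fP]].
  apply HQ. exists f. auto.
Qed.

Lemma small_preimage (P : L -> Prop) (j : L -> L) :
  Injective j -> small L P -> small L (fun y => P (j y)).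
Proof.
  rewrite !small_iff_no_embedding. intros j_inj HP [f [f_inj fP]].
  apply HP. exists (fun x => j (f x)). split; auto.
  intros x y E. auto.
Qed.

Lemma small_image_misses (P : L -> Prop) (F : L -> L) :
  small L P -> exists z, forall y, P y -> F y <> z.
Proof.
  rewrite small_iff_no_embedding. intro HP. apply NNPP. intro N.
  assert (Hsec : forall z, exists y, P y /\ F y = z).
  { intro z. apply NNPP. intro Nz. apply N. exists z. intros y Py Ey. eauto. }
  destruct (choice _ Hsec) as [s Hs].
  apply HP. exists s. split.
  - intros z1 z2 E. now rewrite <- (proj2 (Hs z1)), <- (proj2 (Hs z2)), E.
  - intro z. apply Hs.
Qed.

Lemma full_not_small : ~ small L (fun _ => True).
Proof.
  rewrite small_iff_no_embedding. intro H. apply H.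
  exists (fun x => x). split; [intros x y E; exact E | auto].
Qed.

Variable k : nat -> L.
Hypothesis k_inj : Injective k.

Lemma small_empty : small L (fun _ => False).
Proof. rewrite small_iff_no_embedding. intros [f [_ fP]]. exact (fP (k 0)). Qed.

(* An injection of λ into P ∪ {a} is turned into one into P by precomposing with a Hilbert hotel
   shift that frees the point k 0, which then absorbs the one argument sent to a. *)
Lemma small_add (P : L -> Prop) (a : L) : small L P -> small L (fun x => P x \/ x = a).
Proof.
  rewrite !small_iff_no_embedding. intros HP [f [f_inj fP]].
  destruct (hilbert_hotel L k k_inj) as [sh [sh_inj sh_k0]].
  apply HP.
  exists (fun y => if excluded_middle_informative (f (sh y) = a) then f (k 0) else f (sh y)).
  split.
  - intros y z.
    destruct (excluded_middle_informative (f (sh y) = a)) as [Ey | Ny];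
      destruct (excluded_middle_informative (f (sh z) = a)) as [Ez | Nz]; intro E.
    + apply sh_inj, f_inj. congruence.
    + apply f_inj in E. exfalso. apply (sh_k0 z). auto.
    + apply f_inj in E. exfalso. apply (sh_k0 y). auto.
    + apply sh_inj, f_inj. exact E.
  - intro y. destruct (excluded_middle_informative (f (sh y) = a)) as [Ey | Ny].
    + destruct (fP (k 0)) as [Pk0 | Ek0]; [exact Pk0 |].
      exfalso. apply (sh_k0 y), f_inj. congruence.
    + destruct (fP (sh y)); [assumption | contradiction].
Qed.

Hypothesis Hpow : forall P : L -> Prop, small L P -> card_le ({x : L | P x} -> L) L.

(* Diagonalisation: code the sequences indexed by A as points of λ (possible as λ^{|A|} = λ);
   the sequence g with g(a) outside the a-th coordinates of the codes of the points of X_a has a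
   code that lies in no X_a. *)
Lemma small_union (A : L -> Prop) (X : L -> L -> Prop) :
  small L A -> (forall a, A a -> small L (X a)) ->
  small L (fun y => exists a, A a /\ X a y).
Proof.
  intros HA HX. rewrite small_iff_no_embedding. intros [j [j_inj jU]].
  destruct (Hpow A HA) as [code code_inj].
  destruct (injective_left_inverse _ _ code (inhabits (fun _ => k 0)) code_inj)
    as [decode decodeK].
  assert (Hg : forall a : {a | A a}, exists z,
             forall y, X (proj1_sig a) (j y) -> decode y a <> z).
  { intros [a Aa]. apply small_image_misses, small_preimage; auto. }
  destruct (choice _ Hg) as [g Hg'].
  destruct (jU (code g)) as [a [Aa Xa]].
  apply (Hg' (exist A a Aa) (code g) Xa). now rewrite decodeK.
Qed.

End Small.

Section Cardinal.
Variables (L : Type) (R : L -> L -> Prop).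
Hypothesis Hcard : is_cardinal_order L R.

Lemma segment_small (a : L) : small L (fun y => R y a).
Proof. destruct Hcard as [_ [_ [_ [_ Hseg]]]]. exact (proj2 (Hseg a)). Qed.

Variable k : nat -> L.
Hypothesis k_inj : Injective k.
Hypothesis Hpow : forall P : L -> Prop, small L P -> card_le ({x : L | P x} -> L) L.

Lemma small_bounded (A : L -> Prop) : small L A -> exists b, forall a, A a -> R a b.
Proof.
  intro HA. destruct Hcard as [_ [_ [Htri _]]].
  apply NNPP. intro N.
  assert (Hcover : forall b, exists a, A a /\ (R b a \/ b = a)).
  { intro b. apply NNPP. intro Nb. apply N. exists b. intros a Aa.
    destruct (Htri a b) as [Hab | [Hab | Hab]]; auto; exfalso; eauto. }
  apply (full_not_small L), (small_subset L _ _ (fun b _ => Hcover b)).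
  apply (small_union L k Hpow); [exact HA |].
  intros a _. apply (small_add L k k_inj), segment_small.
Qed.

Lemma image_bounded (X : Type) (Bf : X -> Prop) (G : X -> L -> L) :
  (forall U : (L -> L) -> Prop, unbounded L R U -> card_lt {B : X | Bf B} {f : L -> L | U f}) ->
  exists h, forall B, Bf B -> le_star L R (G B) h.
Proof.
  intro HBsize. set (U := fun f => exists B, Bf B /\ G B = f).
  apply NNPP. intro N.
  assert (HU : unbounded L R U).
  { intros [h Hh]. apply N. exists h. intros B HB. apply Hh. exists B. auto. }
  destruct (HBsize U HU) as [_ Hlt]. apply Hlt.
  assert (Hpick : forall f : {f | U f}, exists B : {B | Bf B}, G (proj1_sig B) = proj1_sig f).
  { intros [f [B [HB EB]]]. exists (exist _ B HB). exact EB. }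
  destruct (choice _ Hpick) as [pick Hpick'].
  exists pick. intros [f1 U1] [f2 U2] E.
  apply (f_equal (fun B => G (proj1_sig B))) in E. rewrite !Hpick' in E. simpl in E.
  subst f2. f_equal. apply proof_irrelevance.
Qed.

Variables (Bf Cf : (L -> Prop) -> Prop) (e : {C : L -> Prop | Cf C} -> L).
Hypothesis e_inj : Injective e.
Hypothesis Hperp : forall B C, Bf B -> Cf C -> small L (fun x => B x /\ C x).

(* The member of Cf with index ξ under the enumeration e, or the empty set if there is none. *)
Definition nth_member (ξ x : L) : Prop := exists c, e c = ξ /\ proj1_sig c x.

Lemma small_inter_nth_member (B : L -> Prop) (ξ : L) :
  Bf B -> small L (fun x => B x /\ nth_member ξ x).
Proof.
  intro HB. destruct (classic (exists c, e c = ξ)) as [[c Ec] | N].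
  - apply (small_subset L _ (fun x => B x /\ proj1_sig c x)).
    + intros x [Bx [c' [Ec' Cx]]]. replace c with c' by (apply e_inj; congruence). auto.
    + apply Hperp; [exact HB | exact (proj2_sig c)].
  - apply (small_subset L _ (fun _ => False)); [| exact (small_empty L k)].
    intros x [_ [c [Ec _]]]. eauto.
Qed.

Definition trace_bound (B : L -> Prop) (g : L -> L) : Prop :=
  forall α ξ x, (R ξ α \/ ξ = α) -> B x -> nth_member ξ x -> R x (g α).

Lemma trace_bounds_exist : exists G, forall B, Bf B -> trace_bound B (G B).
Proof.
  apply (choice (fun B g => Bf B -> trace_bound B g)). intro B.
  destruct (classic (Bf B)) as [HB | NB].
  - assert (Hα : forall α, exists b, forall x,
               (exists ξ, (R ξ α \/ ξ = α) /\ (B x /\ nth_member ξ x)) -> R x b).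
    { intro α. apply small_bounded, (small_union L k Hpow).
      - apply (small_add L k k_inj), segment_small.
      - intros ξ _. apply small_inter_nth_member, HB. }
    destruct (choice _ Hα) as [g Hg].
    exists g. intros _ α ξ x Hξ Bx Mx. apply Hg. eauto.
  - exists (fun _ => k 0). intro HB. contradiction.
Qed.

Definition separator (h : L -> L) (x : L) : Prop := forall ξ, nth_member ξ x -> R x (h ξ).

Lemma separator_small_inter (h : L -> L) (C : L -> Prop) :
  Cf C -> small L (fun x => C x /\ separator h x).
Proof.
  intro HC. apply (small_subset L _ (fun x => R x (h (e (exist _ C HC))))); [| apply segment_small].
  intros x [Cx Sx]. apply Sx. exists (exist _ C HC). auto.
Qed.

Lemma subset_star_separator (B : L -> Prop) (g h : L -> L) :
  trace_bound B g -> le_star L R g h -> subset_star L B (separator h).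
Proof.
  intros Hg Hgh. destruct Hcard as [Hirr [Htrans [Htri _]]].
  destruct (small_bounded _ Hgh) as [α0 Hα0].
  apply (small_subset L _ (fun y => R y (g α0))); [| apply segment_small].
  intros x [Bx NSx]. apply NNPP. intro Nx. apply NSx. intros ξ Mx.
  destruct (Htri ξ α0) as [Hlt | [Heq | Hgt]];
    [exfalso; apply Nx; exact (Hg α0 ξ x (or_introl Hlt) Bx Mx)
    |exfalso; apply Nx; exact (Hg α0 ξ x (or_intror Heq) Bx Mx) |].
  assert (Hxg : R x (g ξ)) by exact (Hg ξ ξ x (or_intror eq_refl) Bx Mx).
  destruct (Htri (h ξ) (g ξ)) as [Hhg | [Hhg | Hhg]].
  - exfalso. apply (Hirr ξ), (Htrans _ α0); [apply Hα0, Hhg | exact Hgt].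
  - rewrite Hhg. exact Hxg.
  - exact (Htrans _ _ _ Hxg Hhg).
Qed.

End Cardinal.

Theorem mainTheorem10
  (L : Type) (R : L -> L -> Prop)
  (Hcard : is_cardinal_order L R)
  (Hinf : card_le nat L)
  (* lambda^{<lambda} = lambda : lambda^mu <= lambda for every mu < lambda *)
  (Hpow : forall P : L -> Prop, small L P -> card_le ({x : L | P x} -> L) L)
  (Bf Cf : (L -> Prop) -> Prop)
  (HBlarge : forall B, Bf B -> large L B)
  (HClarge : forall C, Cf C -> large L C)
  (HCsize : card_le {C : L -> Prop | Cf C} L)
  (* |Bf| < b_lambda : |Bf| is below the size of every unbounded family *)
  (HBsize : forall U : (L -> L) -> Prop, unbounded L R U ->
              card_lt {B : L -> Prop | Bf B} {f : L -> L | U f})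
  (Hperp : forall B C, Bf B -> Cf C -> small L (fun x => B x /\ C x)) :
  separable L Bf Cf.
Proof.
  destruct Hinf as [k k_inj], HCsize as [e e_inj].
  destruct (trace_bounds_exist L R Hcard k k_inj Hpow Bf Cf e e_inj Hperp) as [G HG].
  destruct (image_bounded L R _ Bf G HBsize) as [h Hh].
  exists (separator L R Cf e h). split.
  - intros B HB. apply (subset_star_separator L R Hcard k k_inj Hpow Cf e B (G B)); auto.
  - intros C HC. exact (separator_small_inter L R Hcard Cf e h C HC).
Qed.
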